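(* Under the assumptions on $\Psi$ stated in the context, let $T\in(0,\infty]$, let $g^{in}\in L^1_{-2\beta,1}(0,\infty)$ be non-negative, let $g$ be a weak solution on $[0,T)$, and let $t\in(0,T)$. Then (i) $\lim_{q\to\infty}\int_0^t\int_0^q\int_q^\infty\zeta\Psi(\zeta,\eta)g(\zeta,s)g(\eta,s)d\eta d\zeta ds=0$, and (ii) $\lim_{q\to\infty}q\int_0^t\int_q^\infty\int_q^\infty\Psi(\zeta,\eta)g(\zeta,s)g(\eta,s)d\eta d\zeta ds=0$.
   Context: $\Psi:(0,\infty)^2\to[0,\infty)$ is measurable and symmetric and there are $\beta>0$, $k>0$ with $\Psi(\zeta,\eta)\le k(\zeta\eta)^{-\beta}$ on $(0,1)^2$, $\Psi(\zeta,\eta)\le k\eta\zeta^{-\beta}$ on $(0,1)\times(1,\infty)$, and $\Psi(\zeta,\eta)\le k(\zeta+\eta)$ on $(1,\infty)^2$. $L^1_{-2\beta,1}(0,\infty):=L^1((0,\infty);(\zeta^{-2\beta}+\zeta)d\zeta)$. A weak solution on $[0,T)$ is a non-negative $g\in\mathcal{C}([0,T);L^1(0,\infty))\cap L^\infty(0,T;L^1_{-2\beta,1}(0,\infty))$ such that for every $t\in(0,T)$ and $\omega\in L^\infty(0,\infty)$, $\int_0^\infty[g(\zeta,t)-g^{in}(\zeta)]\omega(\zeta)d\zeta=\frac12\int_0^t\int_0^\infty\int_0^\infty[\omega(\zeta+\eta)-\omega(\zeta)-\omega(\eta)]\Psi(\zeta,\eta)g(\zeta,s)g(\eta,s)d\eta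 d\zeta ds$. *)

From HB Require Import structures.
From mathcomp Require Import all_boot all_order all_algebra.
From mathcomp Require Import all_classical all_reals all_analysis.
Set Implicit Arguments. Unset Strict Implicit. Unset Printing Implicit Defensive.
Import Order.TTheory GRing.Theory Num.Theory.
Import numFieldNormedType.Exports.
Local Open Scope classical_set_scope.
Local Open Scope ring_scope.

Section Defs.
Variable R : realType.
Local Notation mu := (@lebesgue_measure R).

Definition Rpos : set R := `]0%R, +oo[.

Definition tint (T : \bar R) : set R := [set s | 0 <= s /\ (s%:E < T)%E].

Definition kernel_hyp (Psi : R -> R -> R) (beta k : R) : Prop :=
  0 < beta /\ 0 < k /\
  measurable_fun (Rpos `*` Rpos) (fun p : R * R => Psi p.1 p.2) /\
  (forall x y, 0 < x -> 0 < y -> 0 <= Psi x y) /\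
  (forall x y, 0 < x -> 0 < y -> Psi x y = Psi y x) /\
  (forall x y, 0 < x < 1 -> 0 < y < 1 -> Psi x y <= k * (x * y) `^ (- beta)) /\
  (forall x y, 0 < x < 1 -> 1 < y -> Psi x y <= k * y * x `^ (- beta)) /\
  (forall x y, 1 < x -> 1 < y -> Psi x y <= k * (x + y)).

Definition wgt (beta x : R) : R := x `^ (- (2 * beta)) + x.

Definition L1w (beta : R) (f : R -> R) : Prop :=
  measurable_fun Rpos f /\
  (\int[mu]_(x in Rpos) (wgt beta x * `|f x|)%:E < +oo)%E.

(* Weak solution on [0,T) with initial datum gin; g x s = g(x,s). *)
Definition weak_solution (Psi : R -> R -> R) (beta : R) (T : \bar R)
    (gin : R -> R) (g : R -> R -> R) : Prop :=
   (forall x s, 0 < x -> tint T s -> 0 <= g x s) /\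
   measurable_fun (Rpos `*` tint T) (fun p : R * R => g p.1 p.2) /\
   (* g in C([0,T); L^1(0,oo)) *)
   (forall s, tint T s -> mu.-integrable Rpos (fun x => (g x s)%:E)) /\
   (forall s, tint T s -> forall eps : R, 0 < eps -> exists2 delta : R, 0 < delta &
      forall r, tint T r -> `|r - s| < delta ->
        (\int[mu]_(x in Rpos) (`|g x r - g x s|)%:E < eps%:E)%E) /\
   (* g in L^oo(0,T; L^1_{-2beta,1}(0,oo)) *)
   (exists M : R, {ae mu, forall s, 0 < s -> (s%:E < T)%E ->
      (\int[mu]_(x in Rpos) (wgt beta x * g x s)%:E <= M%:E)%E}) /\
   (forall t, 0 < t -> (t%:E < T)%E ->
    forall w : R -> R, measurable_fun Rpos w ->
      (exists C : R, forall x, 0 < x -> `|w x| <= C) ->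
      (\int[mu]_(x in Rpos) ((g x t - gin x) * w x)%:E =
       (2^-1)%:E *
       \int[mu]_(s in `[0%R, t]) \int[mu]_(x in Rpos) \int[mu]_(y in Rpos)
          ((w (x + y) - w x - w y) * Psi x y * g x s * g y s)%:E)%E).

End Defs.

From HB Require Import structures.
From mathcomp Require Import all_boot all_order all_algebra.
From mathcomp Require Import all_classical all_reals all_analysis.
From mathcomp Require Import measurable_realfun lra.

(* With w(x) = x^(-2 beta) + x, the growth conditions on Psi give
   x Psi(x,y) <= 2k w(x) w(y) for 0 < x < q < y, x <> 1, and
   q Psi(x,y) <= 2k w(x) w(y) for x, y > q, when q > 1.  Hence both quantities
   are at most 2k times  int_0^t N(s) N_q(s) ds,  where N(s) is the weighted
   norm int_0^oo w g(s) and N_q(s) its part carried by (q, oo).  Since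
   N(s) <= M for almost every s, dominated convergence gives N_q(s) -> 0 for
   a.e. s and then that the time integral, dominated by M^2, tends to 0. *)

Set Implicit Arguments.
Unset Strict Implicit.
Unset Printing Implicit Defensive.

Import Order.TTheory GRing.Theory Num.Theory.
Import numFieldNormedType.Exports.
Local Open Scope classical_set_scope.
Local Open Scope ring_scope.

Section integral_complements.
Local Open Scope ereal_scope.
Context d (T : measurableType d) (R : realType).
Variable mu : {measure set T -> \bar R}.

(* The integral of a non-negative function is a supremum over the simple
   functions below it, so monotonicity needs no measurability. *)
Lemma ge0_le_integral_nonmeasurable (D : set T) (f1 f2 : T -> \bar R) :
  (forall x, D x -> 0 <= f1 x) -> (forall x, D x -> f1 x <= f2 x) ->
  \int[mu]_(x in D) f1 x <= \int[mu]_(x in D) f2 x.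
Proof.
move=> f10 f12.
have neg0 (f : T -> \bar R) : (forall x, D x -> 0 <= f x) -> (f \_ D)^\- = cst 0.
  move=> f0; apply/funext => x; rewrite funenegE /patch.
  case: ifPn => [/set_mem Dx|_]; last by rewrite oppe0 maxxx.
  by apply/max_r; rewrite leeNl oppe0 f0.
rewrite /integral neg0// neg0 => [|x Dx]; last exact: le_trans (f10 x Dx) (f12 x Dx).
rewrite leeB//; apply: le_ereal_sup => _ [h /= hf <-]; exists h => //= x.
apply: le_trans (hf x) _; rewrite !funeposE /patch.
by case: ifPn => [/set_mem Dx|//]; rewrite ge_max !le_max lexx orbT (f12 x Dx).
Qed.

Lemma ge0_le_integral_nonmeasurable_ae (D N : set T) (f1 f2 : T -> \bar R) :
  measurable D -> measurable N -> mu N = 0 -> measurable_fun D f2 ->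
  (forall x, D x -> 0 <= f1 x) -> (forall x, D x -> ~ N x -> f1 x <= f2 x) ->
  \int[mu]_(x in D) f1 x <= \int[mu]_(x in D) f2 x.
Proof.
move=> mD mN N0 mf2 f10 f12.
(* Raising f2 to +oo on N dominates f1 everywhere and does not change the integral. *)
pose h x := if x \in N then +oo else f2 x.
have mh : measurable_fun D h.
  apply: measurable_fun_if => //.
  - apply: (measurable_fun_bool true).
    rewrite (_ : _ @^-1` _ = N); first exact: measurableI.
    by apply/seteqP; split => x /=; [move/set_mem|move/mem_set].
  - exact: measurable_funS mf2.
apply: (@le_trans _ _ (\int[mu]_(x in D) h x)).
  apply: ge0_le_integral_nonmeasurable => // x Dx; rewrite /h.
  by case: ifPn => [_|/negP xN]; [exact: leey|apply: f12 => // /mem_set].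
rewrite (ae_eq_integral (mu := mu) f2 h mD mh mf2) //; exists N; split => // x /= hf2.
by apply/not_notP => xN; apply: hf2 => _; rewrite /h memNset.
Qed.

Lemma dominated_cvg_pinfty (D : set T) (f_ : R -> T -> \bar R) (f g : T -> \bar R) :
  measurable D -> (forall q, measurable_fun D (f_ q)) -> measurable_fun D f ->
  {ae mu, forall x, D x -> f_ q x @[q --> +oo%R] --> f x} ->
  mu.-integrable D g -> {ae mu, forall x q, D x -> `|f_ q x| <= g x} ->
  \int[mu]_(x in D) f_ q x @[q --> +oo%R] --> \int[mu]_(x in D) f x.
Proof.
move=> mD mf_ mf f_f ig f_g; apply/cvge_pinftyP => u uoo.
have f_uf : {ae mu, forall x, D x -> f_ (u n) x @[n --> \oo] --> f x}.
  by apply: filterS f_f => x + Dx => /(_ Dx) /cvge_pinftyP; exact.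
have f_ug : {ae mu, forall x n, D x -> `|f_ (u n) x| <= g x}.
  by apply: filterS f_g => x + n; exact.
by have [] := dominated_convergence mD (fun n => mf_ (u n)) mf f_uf ig f_ug.
Qed.

Lemma bounded_cvg_pinfty0 (D : set T) (f_ : R -> T -> \bar R) (M : R) :
  measurable D -> mu D < +oo -> (forall q, measurable_fun D (f_ q)) ->
  {ae mu, forall x, D x -> f_ q x @[q --> +oo%R] --> 0} ->
  {ae mu, forall x q, D x -> `|f_ q x| <= M%:E} ->
  \int[mu]_(x in D) f_ q x @[q --> +oo%R] --> 0.
Proof.
move=> mD muD mf_ f_0 f_M; rewrite -(integral0 mu D).
apply: dominated_cvg_pinfty f_0 _ f_M => //.
apply/integrableP; split; first exact: measurable_cst.
by rewrite integral_cst// lte_mul_pinfty.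
Qed.

End integral_complements.

Section iterated_integral_bound.
Local Open Scope ereal_scope.
Context d1 d2 (T1 : measurableType d1) (T2 : measurableType d2) (R : realType).
Variables (mu : {measure set T1 -> \bar R}) (nu : {measure set T2 -> \bar R}).

Lemma iint_le_integralM (X N : set T1) (Y : set T2) (F : T1 -> T2 -> R)
    (u : T1 -> R) (v : T2 -> R) (c : R) :
  measurable X -> measurable N -> mu N = 0 -> measurable Y ->
  measurable_fun X u -> measurable_fun Y v ->
  (forall x, X x -> 0 <= u x)%R -> (forall y, Y y -> 0 <= v y)%R -> (0 <= c)%R ->
  (forall x y, X x -> Y y -> 0 <= F x y)%R ->
  (forall x y, X x -> ~ N x -> Y y -> F x y <= c * u x * v y)%R ->
  \int[mu]_(x in X) \int[nu]_(y in Y) (F x y)%:E <=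
    c%:E * (\int[mu]_(x in X) (u x)%:E * \int[nu]_(y in Y) (v y)%:E).
Proof.
move=> mX mN N0 mY mu_ mv u0 v0 c0 F0 Fuv.
have v0E y : Y y -> 0 <= (v y)%:E by move=> Yy; rewrite lee_fin v0.
have mvE : measurable_fun Y (EFin \o v) by exact/measurable_EFinP.
have cu0 x : X x -> (0 <= c * u x)%R by move=> Xx; rewrite mulr_ge0 ?u0.
apply: (@le_trans _ _ (\int[mu]_(x in X) ((c * u x)%:E * \int[nu]_(y in Y) (v y)%:E))).
  apply: ge0_le_integral_nonmeasurable_ae mN N0 _ _ _ => //.
  - apply: emeasurable_funM; last exact: measurable_cst.
    by apply/measurable_EFinP; apply: measurable_funM.
  - by move=> x Xx; apply: integral_ge0 => y Yy; rewrite lee_fin F0.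
  - move=> x Xx xN; rewrite -ge0_integralZl_EFin ?cu0//.
    apply: ge0_le_integral_nonmeasurable => y Yy; first by rewrite lee_fin F0.
    by rewrite -EFinM lee_fin Fuv.
have cuE x : X x -> 0 <= (c * u x)%:E by move=> Xx; rewrite lee_fin cu0.
rewrite ge0_integralZr ?integral_ge0//; last first.
  by apply/measurable_EFinP; apply: measurable_funM.
under eq_integral do rewrite EFinM.
rewrite ge0_integralZl_EFin ?muleA//; last exact/measurable_EFinP.
Qed.

End iterated_integral_bound.

Section real_line.
Local Open Scope ereal_scope.
Variable R : realType.
Local Notation mu := (@lebesgue_measure R).

Lemma integral_tail_cvg0 (D : set R) (f : R -> \bar R) :
  measurable D -> mu.-integrable D f ->
  \int[mu]_(x in D `&` `]q, +oo[) f x @[q --> +oo%R] --> 0.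
Proof.
move=> mD intf; rewrite -(integral0 mu D).
have mf_ q : measurable_fun D (f \_ `]q, +oo[).
  apply/(measurable_restrict f (measurable_itv _) mD).
  have mf : measurable_fun D f := measurable_int mu intf.
  exact: measurable_funS mD (@subIsetl _ _ _) mf.
have -> : (fun q => \int[mu]_(x in D `&` `]q, +oo[) f x) =
    (fun q => \int[mu]_(x in D) (f \_ `]q, +oo[) x).
  by apply/funext => q; rewrite integral_mkcondr.
(* [mu] is given first: it fixes the measurable structure on the domain of
   [lebesgue_measure], which [apply:] does not unify with the one of [R]. *)
refine (@dominated_cvg_pinfty _ _ _ mu D _ _ _ mD mf_ (measurable_cst _) _
  (integrable_abse intf) _).
- apply: aeW => x _; apply: cvg_near_cst; near=> q.
  rewrite patchE ifF//; apply/negbTE/negP => /set_mem/=.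
  rewrite in_itv/= andbT ltNge; apply/negP/negPn.
  by near: q; apply: nbhs_pinfty_ge; exact: num_real.
- apply: aeW => x q _; rewrite patchE /=.
  by case: ifPn => _ //; rewrite abse0 abse_ge0.
Unshelve. all: by end_near.
Qed.

Lemma measurable_fun_integral_section (S X : set R) (f : R -> R -> R) :
  measurable S -> measurable X -> measurable_fun (S `*` X) (fun p => f p.1 p.2) ->
  (forall s x, S s -> X x -> 0 <= f s x)%R ->
  measurable_fun S (fun s => \int[mu]_(x in X) (f s x)%:E).
Proof.
move=> mS mX mf f0.
pose F p := (((fun p => f p.1 p.2) \_ (S `*` X) p)%:E : \bar R).
have mF : measurable_fun setT F.
  by apply/measurable_EFinP; apply/(measurable_restrictT _ _).1 => //; exact: measurableX.
have F0 p : 0 <= F p.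
  by rewrite /F patchE; case: ifPn => // /set_mem[? ?]; rewrite lee_fin f0.
have /(measurable_funTS (D := S)) := measurable_fun_fubini_tonelli_F (m2 := mu) _ mF F0.
apply: eq_measurable_fun.
move=> s /set_mem Ss; rewrite /fubini_F [RHS]integral_mkcond.
apply: eq_integral => x _; rewrite /F !patchE.
case: ifPn => [/set_mem[_ /mem_set ->]//|/negP SXsx].
by rewrite memNset// => Xx; apply: SXsx; apply/mem_set.
Qed.

Lemma ae_neq (a : R) : {ae mu, forall s, s != a}.
Proof.
exists [set a]; split; [exact: measurable_set1|exact: lebesgue_measure_set1|].
by move=> s /= /negP; rewrite negbK => /eqP.
Qed.

End real_line.

Section weighted_norm.
Variables (R : realType) (beta : R).
Local Notation mu := (@lebesgue_measure R).

Lemma self_le_wgt x : 0 < x -> x <= wgt beta x.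
Proof. by move=> x0; rewrite /wgt lerDr powR_ge0. Qed.

Lemma wgt_ge0 x : 0 < x -> 0 <= wgt beta x.
Proof. by move=> x0; rewrite (le_trans (ltW x0)) ?self_le_wgt. Qed.

Lemma measurable_wgt : measurable_fun setT (wgt beta).
Proof. by apply: measurable_funD => //; exact: measurable_powR. Qed.

Lemma mul_powRN_le_wgt x : 0 < beta -> 0 < x < 1 -> x * x `^ (- beta) <= wgt beta x.
Proof.
move=> b0 /andP[x0 x1]; apply: (@le_trans _ _ (x `^ (- (2 * beta)))).
  have lx : ln x < 0 by rewrite ln_lt0// x0.
  rewrite /powR gt_eqF// -{1}(lnK (x0 : x \in Num.pos)) -expRD ler_expR.
  nra.
by rewrite /wgt lerDl ltW.
Qed.

Definition wnorm (h : R -> R) : \bar R := \int[mu]_(x in @Rpos R) (wgt beta x * h x)%:E.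

Definition wtail (h : R -> R) (q : R) : \bar R :=
  \int[mu]_(x in @Rpos R `&` `]q, +oo[) (wgt beta x * h x)%:E.

Lemma Rpos_gt0 x : @Rpos R x -> 0 < x.
Proof. by rewrite /Rpos/= in_itv/= andbT. Qed.

Lemma itv_oo_sub_Rpos q : `]0%R, q[%classic `<=` @Rpos R.
Proof. by move=> x; rewrite /Rpos/= !in_itv/= andbT => /andP[]. Qed.

Lemma itv_oy_sub_Rpos q : 0 <= q -> `]q, +oo[%classic `<=` @Rpos R.
Proof. by move=> q0 x; rewrite /Rpos/= !in_itv/= !andbT; exact: le_lt_trans. Qed.

Lemma wtail_itv h q : 0 <= q ->
  wtail h q = (\int[mu]_(x in `]q, +oo[) (wgt beta x * h x)%:E)%E.
Proof. by move=> q0; rewrite /wtail setIidr//; exact: itv_oy_sub_Rpos. Qed.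

Section nonneg_function.
Variable h : R -> R.
Hypothesis h0 : forall x, 0 < x -> 0 <= h x.
Hypothesis mh : measurable_fun (@Rpos R) h.

Lemma wgtM_ge0 x : @Rpos R x -> 0 <= wgt beta x * h x.
Proof. by move=> /Rpos_gt0 x0; rewrite mulr_ge0 ?wgt_ge0 ?h0. Qed.

Lemma measurable_wgtM (X : set R) : X `<=` @Rpos R -> measurable X ->
  measurable_fun X (fun x => wgt beta x * h x).
Proof.
move=> XRpos mX; apply: measurable_funM; first exact: measurable_funTS measurable_wgt.
by apply: measurable_funS mh => //; exact: measurable_itv.
Qed.

Lemma wnorm_ge0 : (0 <= wnorm h)%E.
Proof. by apply: integral_ge0 => x /wgtM_ge0; rewrite lee_fin. Qed.

Lemma wtail_ge0 q : (0 <= wtail h q)%E.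
Proof. by apply: integral_ge0 => x [/wgtM_ge0]; rewrite lee_fin. Qed.

Lemma integral_wgtM_le_wnorm (X : set R) : measurable X -> X `<=` @Rpos R ->
  (\int[mu]_(x in X) (wgt beta x * h x)%:E <= wnorm h)%E.
Proof.
move=> mX XRpos; apply: ge0_subset_integral => //; first exact: measurable_itv.
- by apply/measurable_EFinP; apply: measurable_wgtM => //; exact: measurable_itv.
- by move=> x /wgtM_ge0; rewrite lee_fin.
Qed.

Lemma wtail_le_wnorm q : (wtail h q <= wnorm h)%E.
Proof.
by apply: integral_wgtM_le_wnorm; [apply: measurableI; exact: measurable_itv|exact: subIsetl].
Qed.

Lemma wtail_cvg0 : (wnorm h < +oo)%E -> wtail h q @[q --> +oo] --> 0%E.
Proof.
have mRpos : measurable (@Rpos R) by exact: measurable_itv.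
move=> wfin; apply: integral_tail_cvg0 => //; apply/integrableP; split.
  by apply/measurable_EFinP; exact: measurable_wgtM.
by under eq_integral => x /set_mem Rx do rewrite gee0_abs ?lee_fin ?wgtM_ge0//.
Qed.

Lemma iint_le_wnorm_wtail (X N : set R) (F : R -> R -> R) (c q : R) :
  measurable X -> X `<=` @Rpos R -> measurable N -> mu N = 0%E -> 0 <= q -> 0 <= c ->
  (forall x y, X x -> q < y -> 0 <= F x y) ->
  (forall x y, X x -> ~ N x -> q < y -> F x y <= c * (wgt beta x * h x) * (wgt beta y * h y)) ->
  (\int[mu]_(x in X) \int[mu]_(y in `]q, +oo[) (F x y)%:E
     <= c%:E * (wnorm h * wtail h q))%E.
Proof.
move=> mX XRpos mN N0 q0 c0 F0 Fb.
have mIq : measurable `]q, +oo[%classic by exact: measurable_itv.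
have Iq_Rpos := itv_oy_sub_Rpos q0.
have ltq y : `]q, +oo[%classic y -> q < y by rewrite /= in_itv/= andbT.
rewrite wtail_itv//.
apply: (le_trans (@iint_le_integralM _ _ _ _ _ mu mu _ N _ _
  (fun x => wgt beta x * h x) (fun y => wgt beta y * h y) c _ _ _ _ _ _ _ _ _ _ _)) => //.
- exact: measurable_wgtM.
- exact: measurable_wgtM.
- by move=> x /XRpos; exact: wgtM_ge0.
- by move=> y /Iq_Rpos; exact: wgtM_ge0.
- by move=> x y Xx /ltq; exact: F0.
- by move=> x y Xx Nx /ltq; exact: Fb.
apply: lee_wpmul2l; first by rewrite lee_fin.
apply: lee_wpmul2r; first by apply: integral_ge0 => y /Iq_Rpos/wgtM_ge0; rewrite lee_fin.
exact: integral_wgtM_le_wnorm.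
Qed.

End nonneg_function.

End weighted_norm.

Section kernel_bounds.
Variables (R : realType) (Psi : R -> R -> R) (beta k : R).
Hypothesis hK : kernel_hyp Psi beta k.
Local Notation mu := (@lebesgue_measure R).

Lemma kernel_bound_small_large x y : 0 < x -> x != 1 -> x < y -> 1 < y ->
  x * Psi x y <= 2 * k * wgt beta x * wgt beta y.
Proof.
case: hK => b0 [k0 [_ [Psi0 [_ [_ [Psi_sl Psi_ll]]]]]] x0 x1 xy y1.
have y0 : 0 < y by rewrite (lt_trans _ y1).
have wy := self_le_wgt beta y0; have wx := self_le_wgt beta x0.
have wkw : 0 <= k * wgt beta x * wgt beta y.
  by rewrite !mulr_ge0 ?wgt_ge0 // ltW.
have [x_lt1|x_gt1|/eqP] := ltgtP x 1; last by rewrite (negPf x1).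
- have x01 : 0 < x < 1 by rewrite x0.
  have xPsi : x * Psi x y <= k * y * (x * x `^ (- beta)).
    by have := ler_wpM2l (ltW x0) (Psi_sl _ _ x01 y1); lra.
  have : k * y * (x * x `^ (- beta)) <= k * wgt beta y * wgt beta x.
    apply: ler_pM; rewrite ?mulr_ge0 ?powR_ge0 ?ler_wpM2l ?(ltW k0) ?(ltW x0) ?(ltW y0)//.
    exact: mul_powRN_le_wgt.
  lra.
- have : x * Psi x y <= x * (k * (x + y)) by rewrite ler_wpM2l ?Psi_ll ?ltW.
  have kx : 0 < k * x by rewrite mulr_gt0.
  have : x * y <= wgt beta x * wgt beta y by apply: ler_pM => //; apply: ltW.
  nra.
Qed.

Lemma kernel_bound_large_large q x y : 0 <= q -> 1 < x -> 1 < y -> q <= x -> q <= y ->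
  q * Psi x y <= 2 * k * wgt beta x * wgt beta y.
Proof.
case: hK => b0 [k0 [_ [Psi0 [_ [_ [_ Psi_ll]]]]]] q0 x1 y1 qx qy.
have x0 : 0 < x by rewrite (lt_trans _ x1).
have y0 : 0 < y by rewrite (lt_trans _ y1).
have : q * Psi x y <= q * (k * (x + y)) by rewrite ler_wpM2l ?Psi_ll.
have : q * (x + y) <= 2 * (x * y) by nra.
have : x * y <= wgt beta x * wgt beta y.
  by apply: ler_pM; [apply: ltW|apply: ltW|apply: self_le_wgt..].
nra.
Qed.

Section nonneg_function.
Variable h : R -> R.
Hypothesis h0 : forall x, 0 < x -> 0 <= h x.
Hypothesis mh : measurable_fun (@Rpos R) h.

Lemma iint_small_large_bound q : 1 < q ->
  (0 <= \int[mu]_(x in `]0%R, q[) \int[mu]_(y in `]q, +oo[) (x * Psi x y * h x * h y)%:E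
     <= (2 * k)%:E * (wnorm beta h * wtail beta h q))%E.
Proof.
case: hK => _ [k0 [_ [Psi0 _]]] q1; have q0 : 0 < q by rewrite (lt_trans _ q1).
have F0 x y : 0 < x -> q < y -> 0 <= x * Psi x y * h x * h y.
  by move=> x0 /(lt_trans q0) y0; rewrite !mulr_ge0 ?h0 ?Psi0 ?ltW.
have lt0q x : `]0%R, q[%classic x -> 0 < x < q by rewrite /= in_itv.
apply/andP; split.
  apply: integral_ge0 => x /lt0q/andP[x0 _]; apply: integral_ge0 => y.
  by rewrite /= in_itv/= andbT lee_fin => /(F0 _ _ x0).
(* The growth conditions say nothing on the null line x = 1. *)
apply: (iint_le_wnorm_wtail h0 mh (N := [set 1])) => //.
- by move=> x /itv_oo_sub_Rpos.
- exact: lebesgue_measure_set1.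
- by rewrite ltW.
- by rewrite mulr_ge0 ?ltW.
- by move=> x y /lt0q/andP[x0 _]; exact: F0.
move=> x y /lt0q/andP[x0 xq] /eqP x1 qy; have y0 := lt_trans q0 qy.
have := kernel_bound_small_large x0 x1 (lt_trans xq qy) (lt_trans q1 qy).
move/(ler_wpM2r (mulr_ge0 (h0 x0) (h0 y0))); lra.
Qed.

Lemma iint_large_large_bound q : 1 < q ->
  (0 <= \int[mu]_(x in `]q, +oo[) \int[mu]_(y in `]q, +oo[) (Psi x y * h x * h y)%:E
     <= (2 * k / q)%:E * (wnorm beta h * wtail beta h q))%E.
Proof.
case: hK => _ [k0 [_ [Psi0 _]]] q1; have q0 : 0 < q by rewrite (lt_trans _ q1).
have F0 x y : q < x -> q < y -> 0 <= Psi x y * h x * h y.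
  by move=> /(lt_trans q0) x0 /(lt_trans q0) y0; rewrite !mulr_ge0 ?h0 ?Psi0.
have ltq x : `]q, +oo[%classic x -> q < x by rewrite /= in_itv/= andbT.
apply/andP; split.
  apply: integral_ge0 => x /ltq qx; apply: integral_ge0 => y /ltq qy.
  by rewrite lee_fin F0.
apply: (iint_le_wnorm_wtail h0 mh (N := set0)) => //.
- by move=> x /(itv_oy_sub_Rpos (ltW q0)).
- by rewrite ltW.
- by rewrite divr_ge0 ?mulr_ge0 ?ltW.
- by move=> x y /ltq; exact: F0.
move=> x y /ltq qx _ qy; have x0 := lt_trans q0 qx; have y0 := lt_trans q0 qy.
have := kernel_bound_large_large (ltW q0) (lt_trans q1 qx) (lt_trans q1 qy) (ltW qx) (ltW qy).
rewrite -ler_pdivlMl// => /(ler_wpM2r (mulr_ge0 (h0 x0) (h0 y0))); lra.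
Qed.

End nonneg_function.

End kernel_bounds.

Section weak_solution_tails.
Variables (R : realType) (Psi : R -> R -> R) (beta k : R) (T : \bar R).
Variables (gin : R -> R) (g : R -> R -> R) (t : R).
Hypothesis hK : kernel_hyp Psi beta k.
Hypothesis hW : weak_solution Psi beta T gin g.
Hypothesis tT : (t%:E < T)%E.
Local Notation mu := (@lebesgue_measure R).

Lemma tint_itvcc s : `[0, t]%classic s -> tint T s.
Proof.
rewrite /= in_itv/= => /andP[s0 st]; split => //.
by rewrite (le_lt_trans _ tT)// lee_fin.
Qed.

Lemma sol_ge0 s : `[0, t]%classic s -> forall x, 0 < x -> 0 <= g x s.
Proof. by move=> /tint_itvcc st x x0; case: hW => + _; apply. Qed.

Lemma measurable_sol s : `[0, t]%classic s -> measurable_fun (@Rpos R) (g ^~ s).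
Proof.
move=> /tint_itvcc st; case: hW => _ [_ [+ _]] => /(_ s st) /integrableP[+ _].
by move/measurable_EFinP.
Qed.

Lemma measurable_sol_swap :
  measurable_fun (`[0, t]%classic `*` @Rpos R) (fun p => g p.2 p.1).
Proof.
have mtint : measurable (tint T).
  rewrite (_ : tint T = `[0%R, +oo[%classic `&` [set s | (s%:E < T)%E]).
    apply: measurable_lte; first exact: measurable_itv.
      by apply/measurable_EFinP; exact: measurable_id.
    exact: measurable_cst.
  by apply/seteqP; split => s; rewrite /tint/= in_itv/= andbT.
have -> : (fun p => g p.2 p.1) = (fun p => g p.1 p.2) \o unstable.swap by [].
apply: (measurable_comp (F := @Rpos R `*` tint T)).
- by apply: measurableX => //; exact: measurable_itv.
- by move=> _ [[s x] [/= st xp] <-]; split => //=; exact: tint_itvcc.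
- by case: hW => _ [].
- by apply: measurable_funTS; exact: measurable_swap.
Qed.

Lemma measurable_sol_integral (X : set R) : measurable X -> X `<=` @Rpos R ->
  measurable_fun `[0, t]%classic (fun s => \int[mu]_(x in X) (wgt beta x * g x s)%:E)%E.
Proof.
move=> mX XRpos.
apply: (@measurable_fun_integral_section _ _ _ (fun s x => wgt beta x * g x s)) => //.
- apply: measurable_funM.
    exact: measurableT_comp (measurable_wgt beta) (measurable_funTS measurable_snd).
  apply: measurable_funS measurable_sol_swap => //.
    by apply: measurableX => //; exact: measurable_itv.
  by move=> [s x] [/= st /XRpos].
- by move=> s x st /XRpos/Rpos_gt0 x0; rewrite mulr_ge0 ?wgt_ge0 ?(sol_ge0 st).
Qed.

Definition mass_tail (q : R) : \bar R :=
  \int[mu]_(s in `[0, t]) (wnorm beta (g ^~ s) * wtail beta (g ^~ s) q).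

Lemma measurable_mass_tail_integrand q :
  measurable_fun `[0, t]%classic (fun s => wnorm beta (g ^~ s) * wtail beta (g ^~ s) q)%E.
Proof.
have mRpos : measurable (@Rpos R) by exact: measurable_itv.
by apply: emeasurable_funM; apply: measurable_sol_integral => //; exact: measurableI.
Qed.

Lemma mass_tail_cvg0 : mass_tail q @[q --> +oo] --> 0%E.
Proof.
have [M hM] : exists M : R, {ae mu, forall s, `[0, t]%classic s -> (wnorm beta (g ^~ s) <= M%:E)%E}.
  case: hW => _ [_ [_ [_ [[M hM] _]]]]; exists M.
  apply: (filterS2 (F := almost_everywhere mu) _ _ hM (ae_neq 0)) => s Ms s0 st.
  apply: Ms; last by case: (tint_itvcc st).
  by move: st; rewrite /= in_itv/= => /andP[s_ge0 _]; rewrite lt_neqAle eq_sym s0.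
apply: (@bounded_cvg_pinfty0 _ _ _ mu _ _ (M * M)).
- exact: measurable_itv.
- have : (mu (`[0%R, t]%classic : set R) < +oo)%E.
    by rewrite lebesgue_measure_itv/= lte_fin; case: ifP => _; rewrite ?ltry.
  exact.
- exact: measurable_mass_tail_integrand.
- apply: (filterS (F := almost_everywhere mu) _ hM) => s Ms st.
  have wfin : wnorm beta (g ^~ s) \is a fin_num.
    by rewrite ge0_fin_numE ?(wnorm_ge0 _ (sol_ge0 st))// (le_lt_trans (Ms st)) ?ltry.
  have := cvgeZl wfin (wtail_cvg0 (sol_ge0 st) (measurable_sol st) _).
  by rewrite mule0; apply; rewrite (le_lt_trans (Ms st)) ?ltry.
- apply: (filterS (F := almost_everywhere mu) _ hM) => s Ms q st.
  have [w0 tail0] := (wnorm_ge0 beta (sol_ge0 st), wtail_ge0 beta (sol_ge0 st) q).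
  rewrite gee0_abs ?mule_ge0// EFinM lee_pmul// ?Ms//.
  exact: le_trans (wtail_le_wnorm _ (sol_ge0 st) (measurable_sol st) q) (Ms st).
Qed.

Lemma time_integral_bound (F : R -> \bar R) (c q : R) : 0 <= c ->
  (forall s, `[0, t]%classic s ->
     (0 <= F s <= c%:E * (wnorm beta (g ^~ s) * wtail beta (g ^~ s) q))%E) ->
  (0 <= \int[mu]_(s in `[0%R, t]) F s <= c%:E * mass_tail q)%E.
Proof.
move=> c0 Fb; apply/andP; split; first by apply: integral_ge0 => s /Fb/andP[].
rewrite /mass_tail -ge0_integralZl_EFin//.
- by apply: (@ge0_le_integral_nonmeasurable _ _ _ mu) => s /Fb/andP[].
- move=> s st; rewrite mule_ge0 ?(wnorm_ge0 _ (sol_ge0 st)) ?(wtail_ge0 _ (sol_ge0 st))//.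
- exact: measurable_mass_tail_integrand.
Qed.

Lemma small_large_interaction_cvg0 :
  (\int[mu]_(s in `[0%R, t]) \int[mu]_(x in `]0%R, q[) \int[mu]_(y in `]q, +oo[)
     (x * Psi x y * g x s * g y s)%:E)%E @[q --> +oo] --> 0%E.
Proof.
have [_ [k0 _]] := hK.
apply: (@squeeze_cvge _ _ _ _ (fun=> 0%E) _ (fun q => (2 * k)%:E * mass_tail q)%E).
- near=> q; have q1 : 1 < q by near: q; apply: nbhs_pinfty_gt; exact: num_real.
  apply: time_integral_bound => [|s st]; first by rewrite mulr_ge0 ?ltW.
  exact (iint_small_large_bound hK (sol_ge0 st) (measurable_sol st) q1).
- exact: cvg_cst.
- by rewrite -(mule0 (2 * k)%:E); apply: cvgeZl mass_tail_cvg0.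
Unshelve. all: by end_near.
Qed.

Lemma large_large_interaction_cvg0 :
  (q%:E * \int[mu]_(s in `[0%R, t]) \int[mu]_(x in `]q, +oo[) \int[mu]_(y in `]q, +oo[)
     (Psi x y * g x s * g y s)%:E)%E @[q --> +oo] --> 0%E.
Proof.
have [_ [k0 _]] := hK.
apply: (@squeeze_cvge _ _ _ _ (fun=> 0%E) _ (fun q => (2 * k)%:E * mass_tail q)%E).
- near=> q; have q1 : 1 < q by near: q; apply: nbhs_pinfty_gt; exact: num_real.
  have q0 : 0 < q by rewrite (lt_trans _ q1).
  have /andP[I0 Ile] := time_integral_bound (c := 2 * k / q) (q := q)
    (divr_ge0 (mulr_ge0 (ler0n _ 2) (ltW k0)) (ltW q0))
    (fun s st => iint_large_large_bound hK (sol_ge0 st) (measurable_sol st) q1).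
  rewrite mule_ge0 ?lee_fin ?(ltW q0)//=.
  rewrite (_ : 2 * k = q * (2 * k / q)); last by rewrite mulrCA divff ?mulr1 ?gt_eqF.
  rewrite EFinM -muleA; apply: lee_wpmul2l; first by rewrite lee_fin ltW.
  exact Ile.
- exact: cvg_cst.
- by rewrite -(mule0 (2 * k)%:E); apply: cvgeZl mass_tail_cvg0.
Unshelve. all: by end_near.
Qed.

End weak_solution_tails.

Theorem lemma3p3 (R : realType) (Psi : R -> R -> R) (beta k : R)
  (T : \bar R) (gin : R -> R) (g : R -> R -> R) (t : R) :
  kernel_hyp Psi beta k ->
  (0 < T)%E ->
  (forall x, 0 < x -> 0 <= gin x) -> L1w beta gin ->
  weak_solution Psi beta T gin g ->
  0 < t -> (t%:E < T)%E ->
  ((\int[lebesgue_measure]_(s in `[0%R, t]) \int[lebesgue_measure]_(x in `]0%R, q[)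
       \int[lebesgue_measure]_(y in `]q, +oo[) (x * Psi x y * g x s * g y s)%:E)%E
     @[q --> +oo] --> 0%E) /\
  ((q%:E * \int[lebesgue_measure]_(s in `[0%R, t]) \int[lebesgue_measure]_(x in `]q, +oo[)
       \int[lebesgue_measure]_(y in `]q, +oo[) (Psi x y * g x s * g y s)%:E)%E
     @[q --> +oo] --> 0%E).
Proof.
move=> hK _ _ _ hW _ tT; split.
- exact: small_large_interaction_cvg0 hK hW tT.
- exact: large_large_interaction_cvg0 hK hW tT.
Qed.
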